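(* Let $G$ be a connected graph with $|V(G)| \ge 3$. Then $\det'(G) = \det(L(G))$ if and only if $G \notin \{G_1, G_2, G_3\}$, where $G_1,G_2,G_3$ are the following graphs on vertex set $\{1,2,3,4\}$: $G_1$ has edges $\{1,2\},\{2,3\},\{2,4\},\{3,4\}$; $G_2$ has edges $\{1,2\},\{2,3\},\{3,4\},\{1,3\},\{2,4\}$; $G_3 = K_4$.
   Context: All graphs are finite and simple. An automorphism of $G$ is an adjacency-preserving bijection of $V(G)$; $\mathrm{Aut}(G)$ is the automorphism group. A vertex subset $S$ is a vertex determining set if the only automorphism fixing every vertex of $S$ is the identity; the determining number $\det(G)$ is the minimum size of a vertex determining set. For a graph $G$ with at most one isolated vertex and no component isomorphic to $K_2$, an edge subset $T$ is an edge determining set if the only $\phi\in\mathrm{Aut}(G)$ satisfying $\{\phi(u),\phi(v)\}=\{u,v\}$ for all $\{u,v\}\in T$ is the identity; the determining index $\det'(G)$ is the minimum size of an edge determining set. $L(G)$ denotes the line graph of $G$: its vertices are the edges of $G$, two being adjacent when they share an endvertex. *)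

From mathcomp Require Import all_boot all_order all_fingroup.
Set Implicit Arguments. Unset Strict Implicit. Unset Printing Implicit Defensive.

Definition simple_graph (T : finType) (e : rel T) : Prop :=
  symmetric e /\ irreflexive e.

Definition connected_graph (T : finType) (e : rel T) : Prop :=
  forall x y : T, connect e x y.

Definition is_aut (T : finType) (e : rel T) (f : {perm T}) : bool :=
  [forall x, forall y, e (f x) (f y) == e x y].

Definition vdetermining (T : finType) (e : rel T) (S : {set T}) : bool :=
  [forall f : {perm T}, (is_aut e f && [forall x in S, f x == x]) ==> (f == 1%g)].

Definition det_number (T : finType) (e : rel T) : nat :=
  #|[arg min_(S < [set: T] | vdetermining e S) #|S| ]|.

Definition is_edge (T : finType) (e : rel T) (s : {set T}) : bool :=
  [exists x, exists y, e x y && (s == [set x; y])].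

Definition edge_type (T : finType) (e : rel T) := {s : {set T} | is_edge e s}.

Definition line_rel (T : finType) (e : rel T) : rel (edge_type e) :=
  fun a b => (a != b) && (val a :&: val b != set0).

Definition edetermining (T : finType) (e : rel T) (X : {set edge_type e}) : bool :=
  [forall f : {perm T},
     (is_aut e f && [forall a in X, f @: val a == val a]) ==> (f == 1%g)].

Definition det_index (T : finType) (e : rel T) : nat :=
  #|[arg min_(X < [set: edge_type e] | edetermining X) #|X| ]|.

Definition iso_to (T : finType) (e : rel T) (g : rel 'I_4) : Prop :=
  exists h : T -> 'I_4, bijective h /\ forall x y, e x y = g (h x) (h y).

(* Vertices 1,2,3,4 of the paper are 0,1,2,3 here. *)
Definition edge_list_rel (l : seq (nat * nat)) : rel 'I_4 :=
  fun i j => ((nat_of_ord i, nat_of_ord j) \in l) || ((nat_of_ord j, nat_of_ord i) \in l).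

Definition G1 : rel 'I_4 := edge_list_rel [:: (0,1); (1,2); (1,3); (2,3)].
Definition G2 : rel 'I_4 := edge_list_rel [:: (0,1); (1,2); (2,3); (0,2); (1,3)].
Definition G3 : rel 'I_4 := fun i j => i != j.
Arguments line_rel [T] e _ _.
Arguments edetermining [T] e X.

From mathcomp Require Import all_boot all_order all_fingroup.
Set Implicit Arguments. Unset Strict Implicit. Unset Printing Implicit Defensive.

(* An automorphism of G acts on edges, hence on L(G), and for connected G with at least
   3 vertices this action is faithful; so every vertex determining set of L(G) is an edge
   determining set of G, and det'(G) <= det(L(G)).

   Conversely (Whitney), an automorphism psi of L(G) maps every set of three edges through
   a common vertex to such a set: three pairwise adjacent edges form either a triangle,
   which every edge of G meets an even number of times, or a star at a vertex v; and if no
   edge meets a star an odd number of times, G has only the four vertices of the star and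
   is G1, G2, K4, or has all its edges at v.  Outside G1, G2, K4, psi therefore maps stars
   to stars, which defines a vertex map of G inducing psi; it is an automorphism, and an
   edge determining set of G is a vertex determining set of L(G).

   For G1, G2, K4 one checks det' = 1, 1, 2, while L(G) has 2, 2, 3 disjoint pairs of
   twin vertices; the transposition of a twin pair is an automorphism of L(G), so every
   vertex determining set meets every twin pair. *)

Lemma is_autP (T : finType) (r : rel T) (f : {perm T}) :
  is_aut r f -> forall x y, r (f x) (f y) = r x y.
Proof. by move=> /forallP h x y; have /forallP/(_ y)/eqP := h x. Qed.

Lemma is_autV (T : finType) (r : rel T) (f : {perm T}) : is_aut r f -> is_aut r f^-1.
Proof.
move=> fa; apply/forallP => x; apply/forallP => y.
by rewrite -(is_autP fa) !permKV.
Qed.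

Lemma imset_set2 (aT rT : finType) (f : aT -> rT) x y : f @: [set x; y] = [set f x; f y].
Proof. by rewrite imsetU1 imset_set1. Qed.

Lemma eq_set2_card2 (T : finType) (D : {set T}) x y : #|D| = 2 -> x != y ->
  (D == [set x; y]) = (x \in D) && (y \in D).
Proof.
move=> cD nxy; apply/idP/idP => [/eqP -> | /andP [hx hy]].
  by rewrite !inE !eqxx orbT.
rewrite eq_sym eqEcard cD cards2 nxy leqnn andbT.
by apply/subsetP => z; rewrite !inE => /orP [] /eqP ->.
Qed.

Lemma setI_set2_neq0 (T : finType) (A : {set T}) x y :
  (A :&: [set x; y] != set0) = (x \in A) || (y \in A).
Proof.
apply/set0Pn/idP => [[z] | /orP [h|h]].
- by rewrite !inE => /andP [hz /orP [] /eqP <-]; rewrite hz ?orbT.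
- by exists x; rewrite !inE h eqxx.
- by exists y; rewrite !inE h eqxx orbT.
Qed.

Lemma line_rel_sym (T : finType) (e : rel T) : symmetric (line_rel e).
Proof. by move=> a b; rewrite /line_rel eq_sym setIC. Qed.

Lemma line_rel_irr (T : finType) (e : rel T) : irreflexive (line_rel e).
Proof. by move=> a; rewrite /line_rel eqxx. Qed.

Lemma vdetT (A : finType) (r : rel A) : vdetermining r [set: A].
Proof.
apply/forallP => f; apply/implyP => /andP [_ /forallP h]; apply/eqP/permP => x.
by rewrite perm1; apply/eqP; exact: (implyP (h x) (in_setT x)).
Qed.

Lemma det_number_min (A : finType) (r : rel A) (Y : {set A}) :
  vdetermining r Y -> det_number r <= #|Y|.
Proof.
move=> hY; rewrite /det_number.
by case: (arg_minnP (fun S : {set A} => #|S|) (vdetT r)) => S _ /(_ Y hY).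
Qed.

Lemma det_numberP (A : finType) (r : rel A) :
  exists2 Y, vdetermining r Y & det_number r = #|Y|.
Proof.
rewrite /det_number.
by case: (arg_minnP (fun S : {set A} => #|S|) (vdetT r)) => S hS _; exists S.
Qed.

Definition twins (A : finType) (r : rel A) (u w : A) :=
  forall p, p != u -> p != w -> r p u = r p w.

Section Twins.
Variables (A : finType) (r : rel A).
Hypotheses (rsym : symmetric r) (rirr : irreflexive r).

Lemma twins_tperm_aut u w : twins r u w -> is_aut r (tperm u w).
Proof.
move=> tw.
have key p q : q != u -> q != w -> r (tperm u w p) q = r p q.
  move=> qu qw; case: tpermP => [->|->|pu pw] //.
    by rewrite rsym -tw // rsym.
  by rewrite rsym tw // rsym.
apply/forallP => p; apply/forallP => q; apply/eqP.
case: (tpermP u w q) => [->|->|qu qw]; last by apply: key; apply/eqP.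
- case: (tpermP u w p) => [->|->|pu pw]; first by rewrite !rirr.
    by rewrite rsym.
  by rewrite tw //; apply/eqP.
- case: (tpermP u w p) => [->|->|pu pw]; first by rewrite rsym.
    by rewrite !rirr.
  by rewrite -tw //; apply/eqP.
Qed.

Lemma vdet_meets_twins (Y : {set A}) u w : vdetermining r Y ->
  u != w -> twins r u w -> (u \in Y) || (w \in Y).
Proof.
move=> /forallP /(_ (tperm u w)) /implyP hY nuw tw; apply/negPn/negP.
rewrite negb_or => /andP [uY wY].
have /eqP/permP/(_ u) : tperm u w == 1%g.
  apply: hY; rewrite twins_tperm_aut //=; apply/forallP => a; apply/implyP => aY.
  by rewrite tpermD //; apply/eqP => eqa; [move: uY | move: wY]; rewrite eqa aY.
by rewrite tpermL perm1 => wu; rewrite wu eqxx in nuw.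
Qed.

Lemma vdet_twin_mem (Y : {set A}) u w : vdetermining r Y ->
  u != w -> twins r u w -> exists2 p, p \in [:: u; w] & p \in Y.
Proof.
move=> hY nuw tw; case/orP: (vdet_meets_twins hY nuw tw) => pY.
  by exists u; rewrite ?inE ?eqxx.
by exists w; rewrite ?inE ?eqxx ?orbT.
Qed.

Lemma vdet_card_twins2 (Y : {set A}) u1 w1 u2 w2 : vdetermining r Y ->
  u1 != w1 -> twins r u1 w1 -> u2 != w2 -> twins r u2 w2 ->
  (forall p q, p \in [:: u1; w1] -> q \in [:: u2; w2] -> p != q) -> 1 < #|Y|.
Proof.
move=> hY n1 t1 n2 t2 sep.
have [p p1 pY] := vdet_twin_mem hY n1 t1; have [q q2 qY] := vdet_twin_mem hY n2 t2.
by apply/card_gt1P; exists p, q; split => //; exact: sep.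
Qed.

Lemma vdet_card_twins3 (Y : {set A}) u1 w1 u2 w2 u3 w3 : vdetermining r Y ->
  u1 != w1 -> twins r u1 w1 -> u2 != w2 -> twins r u2 w2 -> u3 != w3 -> twins r u3 w3 ->
  (forall p q, p \in [:: u1; w1] -> q \in [:: u2; w2] -> p != q) ->
  (forall p q, p \in [:: u2; w2] -> q \in [:: u3; w3] -> p != q) ->
  (forall p q, p \in [:: u3; w3] -> q \in [:: u1; w1] -> p != q) -> 2 < #|Y|.
Proof.
move=> hY n1 t1 n2 t2 n3 t3 sep12 sep23 sep31.
have [p p1 pY] := vdet_twin_mem hY n1 t1; have [q q2 qY] := vdet_twin_mem hY n2 t2.
have [s s3 sY] := vdet_twin_mem hY n3 t3.
apply/card_gt2P; exists p, q, s; split; split => //.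
- exact: sep12.
- exact: sep23.
- exact: sep31.
Qed.

End Twins.

Definition o0 : 'I_4 := @Ordinal 4 0 isT.
Definition o1 : 'I_4 := @Ordinal 4 1 isT.
Definition o2 : 'I_4 := @Ordinal 4 2 isT.
Definition o3 : 'I_4 := @Ordinal 4 3 isT.

Lemma ord4P (i : 'I_4) : [|| i == o0, i == o1, i == o2 | i == o3].
Proof. by case: i => [[|[|[|[|n]]]] hn]. Qed.

Lemma G1_sym : symmetric G1. Proof. by move=> i j; rewrite /G1 /edge_list_rel orbC. Qed.
Lemma G2_sym : symmetric G2. Proof. by move=> i j; rewrite /G2 /edge_list_rel orbC. Qed.
Lemma G3_sym : symmetric G3. Proof. by move=> i j; rewrite /G3 eq_sym. Qed.
Lemma G1_irr : irreflexive G1. Proof. by case=> [[|[|[|[|n]]]] hn]. Qed.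
Lemma G2_irr : irreflexive G2. Proof. by case=> [[|[|[|[|n]]]] hn]. Qed.
Lemma G3_irr : irreflexive G3. Proof. by move=> i; rewrite /G3 eqxx. Qed.

Definition pairs4 : seq ('I_4 * 'I_4) :=
  [:: (o0, o1); (o0, o2); (o0, o3); (o1, o2); (o1, o3); (o2, o3)].

Definition preserves4 (G : rel 'I_4) (k : 'I_4 -> 'I_4) :=
  all (fun p => G (k p.1) (k p.2) == G p.1 p.2) pairs4.

Definition injective4 (k : 'I_4 -> 'I_4) := all (fun p => k p.1 != k p.2) pairs4.

Definition is_id4 (k : 'I_4 -> 'I_4) := all (fun i => k i == i) [:: o0; o1; o2; o3].

Definition same_pair4 (i j i' j' : 'I_4) :=
  ((i == i') || (i == j')) && ((j == i') || (j == j')).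

Definition meets4 (i j i' j' : 'I_4) := [|| i == i', i == j', j == i' | j == j'].

Definition line_twins4 (G : rel 'I_4) (i j k l : 'I_4) :=
  forall i' j', G i' j' -> ~~ same_pair4 i j i' j' -> ~~ same_pair4 k l i' j' ->
    ~~ same_pair4 i j i' j' && meets4 i j i' j'
    = ~~ same_pair4 k l i' j' && meets4 k l i' j'.

Ltac ord4_maps k := rewrite /preserves4 /injective4 /is_id4 /same_pair4 /=;
  case: (k o0) => [[|[|[|[|?]]]] ?] //; case: (k o1) => [[|[|[|[|?]]]] ?] //;
  case: (k o2) => [[|[|[|[|?]]]] ?] //; case: (k o3) => [[|[|[|[|?]]]] ?] //.

(* Fixing the edge {2,3} of G1, the edge {1,2} of G2, or the edges {1,2}, {1,3} of K4
   forces the identity: det' is 1, 1, 2 respectively. *)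
Lemma G1_rigid k :
  preserves4 G1 k -> injective4 k -> same_pair4 (k o1) (k o2) o1 o2 -> is_id4 k.
Proof. by ord4_maps k. Qed.

Lemma G2_rigid k :
  preserves4 G2 k -> injective4 k -> same_pair4 (k o0) (k o1) o0 o1 -> is_id4 k.
Proof. by ord4_maps k. Qed.

Lemma G3_rigid k : preserves4 G3 k -> injective4 k ->
  same_pair4 (k o0) (k o1) o0 o1 -> same_pair4 (k o0) (k o2) o0 o2 -> is_id4 k.
Proof. by ord4_maps k. Qed.

Ltac ord4_pairs := rewrite /line_twins4 /same_pair4 /meets4;
  move=> [[|[|[|[|?]]]] ?] [[|[|[|[|?]]]] ?] //.

(* Disjoint pairs of twin vertices of the line graphs, each of which meets every
   vertex determining set: det (L G) is at least 2, 2, 3 respectively. *)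
Lemma G1_twins : line_twins4 G1 o1 o2 o1 o3 /\ line_twins4 G1 o0 o1 o2 o3.
Proof. by split; ord4_pairs. Qed.

Lemma G2_twins : line_twins4 G2 o0 o1 o2 o3 /\ line_twins4 G2 o0 o2 o1 o3.
Proof. by split; ord4_pairs. Qed.

Lemma G3_twins : [/\ line_twins4 G3 o0 o1 o2 o3, line_twins4 G3 o0 o2 o1 o3
  & line_twins4 G3 o0 o3 o1 o2].
Proof. by split; ord4_pairs. Qed.

Ltac neqs := repeat match goal with
  | H : is_true (?a != ?b) |- context [?a == ?b] => rewrite (negbTE H)
  | H : is_true (?a != ?b) |- context [?b == ?a] => rewrite (eq_sym b a)
  end; rewrite ?eqxx.

Section Graph.
Variables (T : finType) (e : rel T).
Hypotheses (esym : symmetric e) (eirr : irreflexive e).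
Local Notation E := (edge_type e).

Lemma edgeP (a : E) : exists x y, e x y /\ val a = [set x; y].
Proof.
case: a => s /= /existsP [x /existsP [y /andP [exy /eqP ->]]].
by exists x, y.
Qed.

Lemma adj_neq x y : e x y -> x != y.
Proof. by apply: contraTneq => ->; rewrite eirr. Qed.

Lemma is_edge_set2 x y : e x y -> is_edge e [set x; y].
Proof. by move=> h; apply/existsP; exists x; apply/existsP; exists y; rewrite h eqxx. Qed.

Definition edge_of x y (exy : e x y) : E := exist _ [set x; y] (is_edge_set2 exy).

Lemma card_edge (a : E) : #|val a| = 2.
Proof. by have [x [y [h ->]]] := edgeP a; rewrite cards2 adj_neq. Qed.

Lemma edge_set2 (a : E) x y :
  x != y -> x \in val a -> y \in val a -> val a = [set x; y].
Proof. by move=> nxy hx hy; apply/eqP; rewrite eq_set2_card2 ?card_edge ?hx. Qed.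

Lemma edge_adj (a : E) x y : x != y -> x \in val a -> y \in val a -> e x y.
Proof.
move=> nxy hx hy; have [p [q [hpq ha]]] := edgeP a.
move: hx hy nxy; rewrite ha !inE => /orP [] /eqP -> /orP [] /eqP ->;
  rewrite ?eqxx // => _; by rewrite esym.
Qed.

Lemma edge_other (a : E) x : x \in val a -> exists y, e x y /\ val a = [set x; y].
Proof.
have [p [q [h ha]]] := edgeP a; rewrite ha !inE => /orP [] /eqP ->.
  by exists q.
by exists p; rewrite setUC esym.
Qed.

Lemma edges_meet_once (a b : E) w w' : a != b ->
  w \in val a -> w \in val b -> w' \in val a -> w' \in val b -> w = w'.
Proof.
move=> nab wa wb w'a w'b; apply/eqP/negPn/negP => nw.
by move: nab; rewrite -(inj_eq val_inj) (edge_set2 nw wa w'a) (edge_set2 nw wb w'b) eqxx.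
Qed.

Lemma line_relE (d a : E) x y : x != y -> val a = [set x; y] ->
  line_rel e d a = ~~ ((x \in val d) && (y \in val d)) && ((x \in val d) || (y \in val d)).
Proof.
move=> nxy ha.
by rewrite /line_rel -(inj_eq val_inj) ha eq_set2_card2 ?card_edge // setI_set2_neq0.
Qed.

Definition odd_triple (a b c : E) :=
  [exists d, line_rel e d a (+) line_rel e d b (+) line_rel e d c].

Definition common_vertex (a b c : E) :=
  [exists t, [&& t \in val a, t \in val b & t \in val c]].

Lemma triangle_even (a b c : E) :
  line_rel e a b -> line_rel e a c -> line_rel e b c -> ~~ common_vertex a b c ->
  ~~ odd_triple a b c.
Proof.
move=> /andP [nab mab] /andP [nac mac] /andP [nbc mbc] nc; apply/existsPn => d.
have [x /setIP [xa xb]] := set0Pn _ mab.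
have [y [exy ha]] := edge_other xa.
have [z [exz hb]] := edge_other xb.
have xc : x \notin val c.
  by apply: contra nc => xc; apply/existsP; exists x; rewrite xa xb xc.
have yc : y \in val c.
  by move: mac; rewrite ha setIC setI_set2_neq0 (negbTE xc).
have zc : z \in val c.
  by move: mbc; rewrite hb setIC setI_set2_neq0 (negbTE xc).
have nyz : y != z.
  by apply: contra nab => /eqP yz; rewrite -(inj_eq val_inj) ha hb yz.
rewrite (line_relE _ (adj_neq exy) ha) (line_relE _ (adj_neq exz) hb).
rewrite (line_relE _ nyz (edge_set2 nyz yc zc)).
by case: (x \in val d); case: (y \in val d); case: (z \in val d).
Qed.

Lemma odd_triple_aut (psi : {perm E}) a b c : is_aut (line_rel e) psi ->
  odd_triple a b c -> odd_triple (psi a) (psi b) (psi c).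
Proof.
move=> pa /existsP [d hd]; apply/existsP; exists (psi d).
by rewrite !(is_autP pa).
Qed.

Lemma odd_triple_swap (a b c : E) : odd_triple b a c = odd_triple a b c.
Proof. by apply: eq_existsb => d; case: (line_rel e d a); case: (line_rel e d b). Qed.

Lemma odd_triple_rot (a b c : E) : odd_triple c a b = odd_triple a b c.
Proof.
apply: eq_existsb => d.
by case: (line_rel e d a); case: (line_rel e d b); case: (line_rel e d c).
Qed.

Lemma iso_of_labelling (G : rel 'I_4) (p0 p1 p2 p3 : T) :
  symmetric G -> irreflexive G ->
  (forall t, [|| t == p0, t == p1, t == p2 | t == p3]) ->
  p0 != p1 -> p0 != p2 -> p0 != p3 -> p1 != p2 -> p1 != p3 -> p2 != p3 ->
  e p0 p1 = G o0 o1 -> e p0 p2 = G o0 o2 -> e p0 p3 = G o0 o3 ->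
  e p1 p2 = G o1 o2 -> e p1 p3 = G o1 o3 -> e p2 p3 = G o2 o3 ->
  iso_to e G.
Proof.
move=> Gsym Girr cov d01 d02 d03 d12 d13 d23 h01 h02 h03 h12 h13 h23.
pose h t := if t == p0 then o0 else if t == p1 then o1 else if t == p2 then o2 else o3.
pose g (i : 'I_4) :=
  if i == o0 then p0 else if i == o1 then p1 else if i == o2 then p2 else p3.
have hp0 : h p0 = o0 by rewrite /h eqxx.
have hp1 : h p1 = o1 by rewrite /h eq_sym (negbTE d01) eqxx.
have hp2 : h p2 = o2 by rewrite /h eq_sym (negbTE d02) eq_sym (negbTE d12) eqxx.
have hp3 : h p3 = o3
  by rewrite /h eq_sym (negbTE d03) eq_sym (negbTE d13) eq_sym (negbTE d23).
exists h; split.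
  exists g.
    by move=> t; case/or4P: (cov t) => /eqP ->; rewrite ?hp0 ?hp1 ?hp2 ?hp3.
  by move=> i; case/or4P: (ord4P i) => /eqP ->.
move=> p q; case/or4P: (cov p) => /eqP ->; case/or4P: (cov q) => /eqP ->;
  rewrite ?hp0 ?hp1 ?hp2 ?hp3 ?eirr ?Girr // 1?esym 1?Gsym //.
Qed.

Section Connected.
Hypotheses (econn : connected_graph e) (card_T : 3 <= #|T|).

Lemma closed_setT (A : {set T}) :
  (forall p q, p \in A -> e p q -> q \in A) -> A != set0 -> A = [set: T].
Proof.
move=> hc /set0Pn [x hx]; apply/setP => y; rewrite inE.
have cl : closed e A.
  move=> p q hpq; apply/idP/idP => [hp|hq]; first exact: hc hpq.
  by apply: hc hq _; rewrite esym.
by rewrite -(closed_connect cl (econn x y)).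
Qed.

Lemma exists_adj t : exists u, e t u.
Proof.
have [w hw] : exists w, w != t.
  apply/existsP; rewrite -negb_forall; apply: contraTN card_T => /forallP all_t.
  rewrite -ltnNge ltnS (@leq_trans 1) // -(card1 t).
  by apply/subset_leq_card/subsetP => z _; rewrite inE all_t.
case: (pickP (e t)) => [u hu|h]; first by exists u.
have : [set t] = [set: T].
  apply: closed_setT; last by apply/set0Pn; exists t; rewrite inE.
  by move=> p q; rewrite inE => /eqP -> htq; move: (h q); rewrite htq.
by move/setP/(_ w); rewrite !inE (negbTE hw).
Qed.

Lemma no_K2_component x y : e x y ->
  [exists z, (z != y) && e x z] || [exists z, (z != x) && e y z].
Proof.
move=> hxy; apply/negPn/negP; rewrite negb_or => /andP [/existsPn h1 /existsPn h2].
have [w hw] : exists w, w \notin [set x; y].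
  apply/existsP; rewrite -negb_forall; apply: contraTN card_T => /forallP all_xy.
  rewrite -ltnNge ltnS; apply: (@leq_trans #|[set x; y]|).
    by apply/subset_leq_card/subsetP => z _; exact: all_xy.
  by rewrite cards2 adj_neq.
have : [set x; y] = [set: T].
  apply: closed_setT; last by apply/set0Pn; exists x; rewrite !inE eqxx.
  move=> p q; rewrite !inE => /orP [] /eqP -> hq.
    by move: (h1 q); rewrite hq andbT negbK => ->; rewrite orbT.
  by move: (h2 q); rewrite hq andbT negbK => ->.
by move/setP/(_ w); rewrite in_setT (negbTE hw).
Qed.

(* If f swapped the ends of an edge tu, an edge joining t or u to a third vertex could
   not be fixed; such an edge exists since G is connected with at least 3 vertices. *)
Lemma fix_edges_id (f : {perm T}) : (forall a : E, f @: val a = val a) -> f = 1%g.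
Proof.
move=> hf0; apply/permP => t; rewrite perm1.
have hf x y : e x y -> f @: [set x; y] = [set x; y] by move=> h; exact: (hf0 (edge_of h)).
have f_in x y w : e x y -> w \in [set x; y] -> f w \in [set x; y].
  by move=> h hw; rewrite -(hf _ _ h) imset_f.
have [u htu] := exists_adj t.
have ntu := adj_neq htu.
have /set2P [//|ftu] := f_in _ _ _ htu (set21 t u).
have fut : f u = t.
  have /set2P [//|fuu] := f_in _ _ _ htu (set22 t u).
  by move: ntu; rewrite -(inj_eq (@perm_inj _ f)) ftu fuu eqxx.
case/orP: (no_K2_component htu) => /existsP [z /andP [nzu hz]].
  have /set2P [ut|uz] := f_in _ _ _ hz (set21 t z).
    by move: ntu; rewrite -ftu ut eqxx.
  by move: nzu; rewrite -ftu uz eqxx.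
have /set2P [tu|tz] := f_in _ _ _ hz (set21 u z).
  by move: ntu; rewrite -fut tu eqxx.
by move: nzu; rewrite -fut tz eqxx.
Qed.

Section InducedLinePerm.
Variable f : {perm T}.
Hypothesis fa : is_aut e f.

Lemma is_edge_imset (a : E) : is_edge e (f @: val a).
Proof.
have [x [y [h ->]]] := edgeP a.
by rewrite imset_set2; apply: is_edge_set2; rewrite (is_autP fa).
Qed.

Definition line_map (a : E) : E := exist _ (f @: val a) (is_edge_imset a).

Lemma line_map_inj : injective line_map.
Proof.
move=> a b /(congr1 val) /= /(imset_inj (@perm_inj _ f)) h; exact: val_inj.
Qed.

Definition line_perm := perm line_map_inj.

Lemma line_permE a : val (line_perm a) = f @: val a.
Proof. by rewrite permE. Qed.

Lemma line_perm_aut : is_aut (line_rel e) line_perm.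
Proof.
apply/forallP => a; apply/forallP => b; apply/eqP.
rewrite /line_rel (inj_eq (@perm_inj _ _)) !line_permE -imsetI ?imset_eq0 //.
by move=> x y _ _; exact: perm_inj.
Qed.

End InducedLinePerm.

Lemma vdet_line_edet (Y : {set E}) : vdetermining (line_rel e) Y -> edetermining e Y.
Proof.
move=> /forallP hY; apply/forallP => f; apply/implyP => /andP [fa /forallP hfix].
apply/eqP; apply: fix_edges_id => a.
have : line_perm fa == 1%g.
  apply: (implyP (hY (line_perm fa))); rewrite line_perm_aut /=.
  apply/forallP => b; apply/implyP => hb; apply/eqP/val_inj.
  by rewrite line_permE; apply/eqP; exact: (implyP (hfix b) hb).
by move/eqP => h; rewrite -line_permE h perm1.
Qed.

Section StarAdjacency.
Variables (v x y z : T) (a b c : E).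
Hypotheses (ha : val a = [set v; x]) (hb : val b = [set v; y]) (hc : val c = [set v; z]).
Hypotheses (evx : e v x) (evy : e v y) (evz : e v z).
Hypotheses (nxy : x != y) (nxz : x != z).
Hypothesis even : ~~ odd_triple a b c.

Let nvx := adj_neq evx.
Let nvy := adj_neq evy.
Let nvz := adj_neq evz.

Lemma meets_evenly (d : E) :
  line_rel e d a (+) line_rel e d b (+) line_rel e d c = false.
Proof. by apply: negbTE; move/existsPn: even. Qed.

Lemma star_adj_center w : e v w -> [|| w == x, w == y | w == z].
Proof.
move=> evw; apply/negPn/negP; rewrite !negb_or => /and3P [nwx nwy nwz].
have := meets_evenly (edge_of evw).
by rewrite (line_relE _ nvx ha) (line_relE _ nvy hb) (line_relE _ nvz hc) /= !inE; neqs.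
Qed.

Lemma star_adj_leaf w : e x w -> [|| w == v, w == y | w == z].
Proof.
move=> exw; apply/negPn/negP; rewrite !negb_or => /and3P [nwv nwy nwz].
have := meets_evenly (edge_of exw).
by rewrite (line_relE _ nvx ha) (line_relE _ nvy hb) (line_relE _ nvz hc) /= !inE; neqs.
Qed.

End StarAdjacency.

Section StarCases.
Variables (v x y z : T) (a b c : E).
Hypotheses (ha : val a = [set v; x]) (hb : val b = [set v; y]) (hc : val c = [set v; z]).
Hypotheses (evx : e v x) (evy : e v y) (evz : e v z).
Hypotheses (nxy : x != y) (nxz : x != z) (nyz : y != z).
Hypothesis even : ~~ odd_triple a b c.

Lemma star_cover t : [|| t == v, t == x, t == y | t == z].
Proof.
have Hv := star_adj_center ha hb hc evx evy evz even.
have Hx := star_adj_leaf ha hb hc evx evy evz nxy nxz even.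
have Hy : forall w, e y w -> [|| w == v, w == x | w == z].
  by apply: (star_adj_leaf hb ha hc) => //; rewrite 1?eq_sym // odd_triple_swap.
have Hz : forall w, e z w -> [|| w == v, w == x | w == y].
  by apply: (star_adj_leaf hc ha hb) => //; rewrite 1?eq_sym // odd_triple_rot.
suff : t \in [set v; x; y; z] by rewrite !inE -!orbA.
rewrite (closed_setT (A := [set v; x; y; z])) ?inE //; last first.
  by apply/set0Pn; exists v; rewrite !inE eqxx.
move=> p q; rewrite !inE -!orbA; case/or4P => /eqP -> hq.
- by case/or3P: (Hv q hq) => ->; rewrite ?orbT.
- by case/or3P: (Hx q hq) => ->; rewrite ?orbT.
- by case/or3P: (Hy q hq) => ->; rewrite ?orbT.
- by case/or3P: (Hz q hq) => ->; rewrite ?orbT.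
Qed.

Lemma star_cases :
  iso_to e G1 \/ iso_to e G2 \/ iso_to e G3 \/ (forall d : E, v \in val d).
Proof.
have nvx := adj_neq evx; have nvy := adj_neq evy; have nvz := adj_neq evz.
(* Three edges among x, y, z give K4, two give G2 (the non-adjacent pair labelled 1, 4),
   one gives G1 (the pendant vertex labelled 1), none leaves the star at v. *)
case exy: (e x y); case exz: (e x z); case eyz: (e y z);
  [ do 2 right; left; apply: (iso_of_labelling (p0:=v) (p1:=x) (p2:=y) (p3:=z) G3_sym G3_irr)
  | right; left; apply: (iso_of_labelling (p0:=y) (p1:=v) (p2:=x) (p3:=z) G2_sym G2_irr)
  | right; left; apply: (iso_of_labelling (p0:=x) (p1:=v) (p2:=y) (p3:=z) G2_sym G2_irr)
  | left; apply: (iso_of_labelling (p0:=z) (p1:=v) (p2:=x) (p3:=y) G1_sym G1_irr)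
  | right; left; apply: (iso_of_labelling (p0:=x) (p1:=v) (p2:=z) (p3:=y) G2_sym G2_irr)
  | left; apply: (iso_of_labelling (p0:=y) (p1:=v) (p2:=x) (p3:=z) G1_sym G1_irr)
  | left; apply: (iso_of_labelling (p0:=x) (p1:=v) (p2:=y) (p3:=z) G1_sym G1_irr)
  | do 3 right; move=> d ].
all: try by move=> t; case/or4P: (star_cover t) => ->; rewrite ?orbT.
all: try by neqs.
all: try by rewrite /G1 /G2 /G3 /edge_list_rel /= 1?esym ?evx ?evy ?evz ?exy ?exz ?eyz.
have [p [q [epq ->]]] := edgeP d; rewrite !inE.
move: epq; case/or4P: (star_cover p) => /eqP ->; case/or4P: (star_cover q) => /eqP ->;
  rewrite ?eqxx ?orbT ?eirr ?exy ?exz ?eyz // esym ?exy ?exz ?eyz //.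
Qed.

End StarCases.

Definition nbhd t := [set u | e t u].

Lemma exists_two_edges t :
  1 < #|nbhd t| -> exists a b : E, [/\ a != b, t \in val a & t \in val b].
Proof.
move/card_gt1P => [u1 [u2 []]]; rewrite !inE => h1 h2 n12.
exists (edge_of h1), (edge_of h2); rewrite /= !inE !eqxx; split => //.
rewrite -(inj_eq val_inj) /=; apply: contra n12 => /eqP h.
have /set2P [u2t|->//] : u2 \in [set t; u1] by rewrite h !inE eqxx orbT.
by move: h2; rewrite u2t eirr.
Qed.

Lemma two_edges_deg (a b : E) t : a != b -> t \in val a -> t \in val b -> 1 < #|nbhd t|.
Proof.
move=> nab ta tb.
have [p [etp ha]] := edge_other ta.
have [q [etq hb]] := edge_other tb.
apply/card_gt1P; exists p, q; rewrite !inE etp etq; split => //.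
by apply: contra nab => /eqP pq; rewrite -(inj_eq val_inj) ha hb pq.
Qed.

Lemma leaf_edge_uniq t (a b : E) : #|nbhd t| == 1 -> t \in val a -> t \in val b -> a = b.
Proof.
move=> lt ta tb; apply/eqP/negPn/negP => nab.
by move: (two_edges_deg nab ta tb); rewrite (eqP lt).
Qed.

Lemma adj_nonleaf p q : e p q -> (1 < #|nbhd p|) || (1 < #|nbhd q|).
Proof.
move=> epq; case/orP: (no_K2_component epq) => /existsP [z /andP [nz hz]].
  by apply/orP; left; apply/card_gt1P; exists q, z; rewrite !inE epq hz eq_sym nz.
by apply/orP; right; apply/card_gt1P; exists p, z; rewrite !inE esym epq hz eq_sym nz.
Qed.

Lemma deg_cases t : (1 < #|nbhd t|) || (#|nbhd t| == 1).
Proof.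
have [u htu] := exists_adj t.
have : 0 < #|nbhd t| by apply/card_gt0P; exists u; rewrite inE.
by case: #|nbhd t| => [|[|n]].
Qed.

Section Whitney.
Hypothesis not_exceptional : ~ (iso_to e G1 \/ iso_to e G2 \/ iso_to e G3).

Lemma common_vertex_aut (psi : {perm E}) (a b c : E) : is_aut (line_rel e) psi ->
  a != b -> a != c -> b != c ->
  common_vertex a b c -> common_vertex (psi a) (psi b) (psi c).
Proof.
move=> pa nab nac nbc /existsP [v /and3P [va vb vc]].
have [x [evx ha]] := edge_other va.
have [y [evy hb]] := edge_other vb.
have [z [evz hc]] := edge_other vc.
have nxy : x != y by apply: contra nab => /eqP xy; rewrite -(inj_eq val_inj) ha hb xy.
have nxz : x != z by apply: contra nac => /eqP xz; rewrite -(inj_eq val_inj) ha hc xz.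
have nyz : y != z by apply: contra nbc => /eqP yz; rewrite -(inj_eq val_inj) hb hc yz.
have adj_images (p q : E) :
    p != q -> v \in val p -> v \in val q -> line_rel e (psi p) (psi q).
  move=> npq vp vq; rewrite (is_autP pa) /line_rel npq /=.
  by apply/set0Pn; exists v; rewrite inE vp vq.
have [odd_abc|even_abc] := boolP (odd_triple a b c).
  apply: contraLR (odd_triple_aut pa odd_abc); apply: triangle_even;
    exact: adj_images.
have [G1e|[G2e|[G3e|all_v]]] := star_cases ha hb hc evx evy evz nxy nxz nyz even_abc.
- by case: not_exceptional; left.
- by case: not_exceptional; right; left.
- by case: not_exceptional; right; right.
- by apply/existsP; exists v; rewrite !all_v.
Qed.

Definition maps_star (psi : {perm E}) t w :=
  [&& 1 < #|nbhd t|, 1 < #|nbhd w|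
    & [forall a : E, (t \in val a) ==> (w \in val (psi a))]].

Lemma maps_starP psi t w :
  maps_star psi t w -> forall a : E, t \in val a -> w \in val (psi a).
Proof. by case/and3P => _ _ /forallP h a ta; exact: (implyP (h a) ta). Qed.

Lemma exists_maps_star (psi : {perm E}) t : is_aut (line_rel e) psi ->
  1 < #|nbhd t| -> exists w, maps_star psi t w.
Proof.
move=> pa dt; have [a1 [a2 [n12 t1 t2]]] := exists_two_edges dt.
have /andP [pn12 /set0Pn [w /setIP [w1 w2]]] : line_rel e (psi a1) (psi a2).
  by rewrite (is_autP pa) /line_rel n12 /=; apply/set0Pn; exists t; rewrite inE t1 t2.
exists w; apply/and3P; split => //; first exact: two_edges_deg pn12 w1 w2.
apply/forallP => c; apply/implyP => tc.
have [<-|n1c] := eqVneq a1 c; first by [].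
have [<-|n2c] := eqVneq a2 c; first by [].
have /existsP [w' /and3P [w'1 w'2 w'c]] : common_vertex (psi a1) (psi a2) (psi c).
  by apply: common_vertex_aut => //; apply/existsP; exists t; rewrite t1 t2 tc.
by rewrite (edges_meet_once pn12 w1 w2 w'1 w'2).
Qed.

Lemma maps_star_uniq psi t w w' : maps_star psi t w -> maps_star psi t w' -> w = w'.
Proof.
move=> cw cw'; have /andP [dt _] := cw.
have [a1 [a2 [n12 t1 t2]]] := exists_two_edges dt.
have pn : psi a1 != psi a2 by rewrite (inj_eq (@perm_inj _ _)).
exact: (edges_meet_once pn (maps_starP cw t1) (maps_starP cw t2)
  (maps_starP cw' t1) (maps_starP cw' t2)).
Qed.

Lemma maps_starV (psi : {perm E}) t w : is_aut (line_rel e) psi ->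
  maps_star psi t w -> maps_star psi^-1 w t.
Proof.
move=> pa cw; have /and3P [dt dw _] := cw.
have [t' ct'] := exists_maps_star (is_autV pa) dw.
have [a1 [a2 [n12 t1 t2]]] := exists_two_edges dt.
have := maps_starP ct' (maps_starP cw t1); rewrite permK => h1.
have := maps_starP ct' (maps_starP cw t2); rewrite permK => h2.
by rewrite -(edges_meet_once n12 h1 h2 t1 t2).
Qed.

Lemma maps_star_inj (psi : {perm E}) t t' w : is_aut (line_rel e) psi ->
  maps_star psi t w -> maps_star psi t' w -> t = t'.
Proof. by move=> pa c1 c2; apply: maps_star_uniq (maps_starV pa c1) (maps_starV pa c2). Qed.

Section VertexMap.
Variable psi : {perm E}.
Hypothesis pa : is_aut (line_rel e) psi.

(* The image of the pendant edge tu has the star image of u as one end; the other end is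
   a leaf, since psi^-1 could map its star only to the star at t or at u. *)
Lemma exists_leaf_image t : #|nbhd t| == 1 ->
  exists2 w, #|nbhd w| == 1 & forall a : E, t \in val a -> w \in val (psi a).
Proof.
move=> lt; have [u htu] := exists_adj t.
have du : 1 < #|nbhd u| by case/orP: (adj_nonleaf htu); rewrite ?(eqP lt).
have [w0 cw0] := exists_maps_star pa du.
have ta : t \in val (edge_of htu) by rewrite /= !inE eqxx.
have ua : u \in val (edge_of htu) by rewrite /= !inE eqxx orbT.
have [x [ew0x hpa]] := edge_other (maps_starP cw0 ua).
have xa : x \in val (psi (edge_of htu)) by rewrite hpa !inE eqxx orbT.
exists x; last by move=> c tc; rewrite -(leaf_edge_uniq lt ta tc).
case/orP: (deg_cases x) => // dx.
have [t' ct'] := exists_maps_star (is_autV pa) dx.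
have := maps_starP ct' xa; rewrite permK /= => /set2P [t't|t'u].
  by move: ct' => /and3P [_]; rewrite t't (eqP lt).
rewrite t'u in ct'; have xw0 := maps_star_inj (is_autV pa) ct' (maps_starV pa cw0).
by move: ew0x; rewrite xw0 eirr.
Qed.

Definition vertex_rel t w := maps_star psi t w ||
  [&& #|nbhd t| == 1, #|nbhd w| == 1
    & [forall a : E, (t \in val a) ==> (w \in val (psi a))]].

Lemma exists_vertex_rel t : exists w, vertex_rel t w.
Proof.
case/orP: (deg_cases t) => [dt|lt].
  by have [w cw] := exists_maps_star pa dt; exists w; rewrite /vertex_rel cw.
have [w lw hw] := exists_leaf_image lt; exists w; apply/orP; right.
by rewrite lt lw; apply/forallP => a; apply/implyP; exact: hw.
Qed.

Definition vertex_map t := odflt t [pick w | vertex_rel t w].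

Lemma vertex_mapP t : vertex_rel t (vertex_map t).
Proof.
rewrite /vertex_map; case: pickP => [w //|none].
by have [w hw] := exists_vertex_rel t; move: (none w); rewrite hw.
Qed.

Lemma vertex_map_edge (a : E) t : t \in val a -> vertex_map t \in val (psi a).
Proof.
move=> ta; case/orP: (vertex_mapP t) => [c|/and3P [_ _ /forallP h]].
  exact: maps_starP c _ ta.
exact: implyP (h a) ta.
Qed.

Lemma vertex_map_star t : 1 < #|nbhd t| -> maps_star psi t (vertex_map t).
Proof.
by move=> dt; case/orP: (vertex_mapP t) => // /and3P [lt]; rewrite (eqP lt) in dt.
Qed.

Lemma vertex_map_leaf t : #|nbhd t| == 1 -> #|nbhd (vertex_map t)| == 1.
Proof.
move=> lt; case/orP: (vertex_mapP t) => [/and3P [dt]|/and3P [_ -> //]].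
by rewrite (eqP lt) in dt.
Qed.

Lemma vertex_map_deg t : 1 < #|nbhd t| -> 1 < #|nbhd (vertex_map t)|.
Proof. by move/vertex_map_star/and3P => []. Qed.

Lemma vertex_map_adj_neq p q : e p q -> vertex_map p != vertex_map q.
Proof.
move=> epq; apply/eqP => fpq.
case/orP: (deg_cases p) => [dp|lp]; case/orP: (deg_cases q) => [dq|lq].
- have := vertex_map_star dq; rewrite -fpq => cq.
  by move: epq; rewrite (maps_star_inj pa (vertex_map_star dp) cq) eirr.
- by have := vertex_map_deg dp; rewrite fpq (eqP (vertex_map_leaf lq)).
- by have := vertex_map_deg dq; rewrite -fpq (eqP (vertex_map_leaf lp)).
- by case/orP: (adj_nonleaf epq); rewrite ?(eqP lp) ?(eqP lq).
Qed.

Lemma line_aut_induced (a : E) : val (psi a) = vertex_map @: val a.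
Proof.
have [p [q [epq ha]]] := edgeP a.
rewrite ha imset_set2; apply: edge_set2; first exact: vertex_map_adj_neq.
  by apply: vertex_map_edge; rewrite ha !inE eqxx.
by apply: vertex_map_edge; rewrite ha !inE eqxx orbT.
Qed.

Lemma vertex_map_inj : injective vertex_map.
Proof.
move=> p q fpq.
case/orP: (deg_cases p) => [dp|lp]; case/orP: (deg_cases q) => [dq|lq].
- by apply: (maps_star_inj pa (vertex_map_star dp)); rewrite fpq; exact: vertex_map_star.
- by have := vertex_map_deg dp; rewrite fpq (eqP (vertex_map_leaf lq)).
- by have := vertex_map_deg dq; rewrite -fpq (eqP (vertex_map_leaf lp)).
have [u epu] := exists_adj p; have [v eqv] := exists_adj q.
have pa1 : p \in val (edge_of epu) by rewrite /= !inE eqxx.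
have qb1 : q \in val (edge_of eqv) by rewrite /= !inE eqxx.
have := vertex_map_edge qb1; rewrite -fpq => fpb.
have /perm_inj same_edge := leaf_edge_uniq (vertex_map_leaf lp) (vertex_map_edge pa1) fpb.
have : q \in val (edge_of epu) by rewrite same_edge.
rewrite /= => /set2P [-> //|qu].
have epq : e p q by rewrite qu.
by case/orP: (adj_nonleaf epq); rewrite ?(eqP lp) ?(eqP lq).
Qed.

Definition vertex_perm := perm vertex_map_inj.

Lemma vertex_perm_aut : is_aut e vertex_perm.
Proof.
apply/forallP => x; apply/forallP => y; apply/eqP; rewrite !permE.
apply/idP/idP => [hf|hxy]; last first.
  apply: (edge_adj (a := psi (edge_of hxy))); first exact: vertex_map_adj_neq.
    by rewrite line_aut_induced /= imset_set2 !inE eqxx.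
  by rewrite line_aut_induced /= imset_set2 !inE eqxx orbT.
have nxy : x != y by apply: contraTneq hf => ->; rewrite eirr.
pose a := (psi^-1)%g (edge_of hf).
have [p [q [epq ha]]] := edgeP a.
have : val (psi a) = [set vertex_map x; vertex_map y] by rewrite /a permKV.
rewrite line_aut_induced ha imset_set2 => hb.
have fxa : vertex_map x \in [set vertex_map p; vertex_map q] by rewrite hb !inE eqxx.
have fya : vertex_map y \in [set vertex_map p; vertex_map q] by rewrite hb !inE eqxx orbT.
rewrite !inE !(inj_eq vertex_map_inj) in fxa fya.
by apply: (edge_adj (a := a) nxy); rewrite ha !inE.
Qed.

End VertexMap.

Lemma edet_vdet_line (X : {set E}) : edetermining e X -> vdetermining (line_rel e) X.
Proof.
move=> /forallP hX; apply/forallP => psi; apply/implyP => /andP [pa /forallP hfix].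
have fE : vertex_perm pa =1 vertex_map psi by move=> t; rewrite permE.
have /eqP f1 : vertex_perm pa == 1%g.
  apply: (implyP (hX (vertex_perm pa))); rewrite vertex_perm_aut /=.
  apply/forallP => a; apply/implyP => ha.
  have e1 : val (psi a) = val a by rewrite (eqP (implyP (hfix a) ha)).
  by rewrite -{2}e1 (line_aut_induced pa) (eq_imset _ fE).
apply/eqP/permP => a; rewrite perm1; apply: val_inj.
rewrite (line_aut_induced pa) -(eq_imset _ fE) f1.
by rewrite -[RHS]imset_id; apply: eq_imset => t; rewrite perm1.
Qed.

End Whitney.

Lemma det_index_min (X : {set E}) : edetermining e X -> det_index e <= #|X|.
Proof.
move=> hX; rewrite /det_index.
by case: (arg_minnP (fun S : {set E} => #|S|) (vdet_line_edet (vdetT (line_rel e))))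
  => S _ /(_ X hX).
Qed.

Lemma det_indexP : exists2 X : {set E}, edetermining e X & det_index e = #|X|.
Proof.
rewrite /det_index.
by case: (arg_minnP (fun S : {set E} => #|S|) (vdet_line_edet (vdetT (line_rel e))))
  => S hS _; exists S.
Qed.

Section Exceptional.
Variables (G : rel 'I_4) (h : T -> 'I_4) (g : 'I_4 -> T).
Hypotheses (hK : cancel h g) (gK : cancel g h) (hiso : forall x y, e x y = G (h x) (h y)).

Let g_inj : injective g := can_inj gK.
Let h_inj : injective h := can_inj hK.

Lemma adj_g i j : G i j -> e (g i) (g j).
Proof. by rewrite hiso !gK. Qed.

Definition edge4 i j (Gij : G i j) : E := edge_of (adj_g Gij).

Definition conj4 (f : {perm T}) i := h (f (g i)).

Lemma conj4_preserves (f : {perm T}) : is_aut e f -> preserves4 G (conj4 f).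
Proof. by move=> fa; apply/allP => p _; rewrite /conj4 -hiso (is_autP fa) hiso !gK. Qed.

Lemma conj4_inj (f : {perm T}) : injective4 (conj4 f).
Proof.
apply/allP => p hp; rewrite /conj4 (inj_eq h_inj) (inj_eq (@perm_inj _ f)) (inj_eq g_inj).
by move: hp; rewrite !inE => /or4P [|||/orP [|/orP []]] /eqP ->.
Qed.

Lemma conj4_fix (f : {perm T}) i j (Gij : G i j) :
  f @: val (edge4 Gij) = val (edge4 Gij) -> same_pair4 (conj4 f i) (conj4 f j) i j.
Proof.
rewrite /= imset_set2 => hf.
have fi : f (g i) \in [set g i; g j] by rewrite -hf !inE eqxx.
have fj : f (g j) \in [set g i; g j] by rewrite -hf !inE eqxx orbT.
have hE x a : (h x == a) = (x == g a) by rewrite -(inj_eq h_inj) gK.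
by rewrite !inE in fi fj; rewrite /same_pair4 /conj4 !hE fi fj.
Qed.

Lemma conj4_id (f : {perm T}) : is_id4 (conj4 f) -> f = 1%g.
Proof.
move=> /allP fid; apply/permP => t; rewrite perm1 -(hK t).
have /fid : h t \in [:: o0; o1; o2; o3] by rewrite !inE; exact: ord4P.
by rewrite /conj4 -{2}(gK (h t)) (inj_eq h_inj) => /eqP ->.
Qed.

Lemma det_index_le1 i j (Gij : G i j) :
  (forall k, preserves4 G k -> injective4 k -> same_pair4 (k i) (k j) i j -> is_id4 k) ->
  det_index e <= 1.
Proof.
move=> rigid; rewrite -(cards1 (edge4 Gij)); apply: det_index_min.
apply/forallP => f; apply/implyP => /andP [fa /forallP hf]; apply/eqP; apply: conj4_id.
apply: rigid (conj4_preserves fa) (conj4_inj f) _.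
exact/conj4_fix/eqP/(implyP (hf _))/set11.
Qed.

Lemma det_index_le2 i j k l (Gij : G i j) (Gkl : G k l) : edge4 Gij != edge4 Gkl ->
  (forall m, preserves4 G m -> injective4 m -> same_pair4 (m i) (m j) i j ->
     same_pair4 (m k) (m l) k l -> is_id4 m) ->
  det_index e <= 2.
Proof.
move=> neq rigid; apply: (@leq_trans #|[set edge4 Gij; edge4 Gkl]|); last first.
  by rewrite cards2 neq.
apply: det_index_min.
apply/forallP => f; apply/implyP => /andP [fa /forallP hf]; apply/eqP; apply: conj4_id.
apply: rigid (conj4_preserves fa) (conj4_inj f) _ _.
  exact/conj4_fix/eqP/(implyP (hf _))/setU11.
exact/conj4_fix/eqP/(implyP (hf _))/setU1r/set11.
Qed.

Lemma edge4_neq i j k l (Gij : G i j) (Gkl : G k l) :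
  ((k != i) && (k != j)) || ((l != i) && (l != j)) -> edge4 Gij != edge4 Gkl.
Proof.
move=> hc; apply/eqP => /(congr1 val) /= hs.
have : g k \in [set g i; g j] by rewrite hs !inE eqxx.
have : g l \in [set g i; g j] by rewrite hs !inE eqxx orbT.
rewrite !inE !(inj_eq g_inj).
by case/orP: hc => /andP [/negbTE -> /negbTE ->].
Qed.

Lemma edge4_twins i j k l (Gij : G i j) (Gkl : G k l) :
  line_twins4 G i j k l -> twins (line_rel e) (edge4 Gij) (edge4 Gkl).
Proof.
move=> tw p np1 np2.
have [x [y [exy hp]]] := edgeP p.
have vij : val (edge4 Gij) = [set g i; g j] by [].
have vkl : val (edge4 Gkl) = [set g k; g l] by [].
rewrite (line_relE _ (adj_neq (adj_g Gij)) vij) (line_relE _ (adj_neq (adj_g Gkl)) vkl).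
have : val p != [set g i; g j] by rewrite -vij (inj_eq val_inj).
have : val p != [set g k; g l] by rewrite -vkl (inj_eq val_inj).
rewrite !eq_set2_card2 ?card_edge ?(adj_neq (adj_g _)) //.
rewrite hp -(hK x) -(hK y) !inE !(inj_eq g_inj) -!orbA => n2 n1.
by apply: tw; rewrite // -hiso.
Qed.

Arguments edge4_twins {i j k l} Gij Gkl.

Lemma G1_gap : G = G1 -> det_index e < det_number (line_rel e).
Proof.
move=> HG.
have G01 : G o0 o1 by rewrite HG. have G12 : G o1 o2 by rewrite HG.
have G13 : G o1 o3 by rewrite HG. have G23 : G o2 o3 by rewrite HG.
have di : det_index e <= 1.
  by apply: (det_index_le1 G12); rewrite HG; exact: G1_rigid.
have [tw1 tw2] := G1_twins; rewrite -HG in tw1 tw2.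
have [Y hY ->] := det_numberP (line_rel e).
apply: leq_ltn_trans di (vdet_card_twins2 (@line_rel_sym _ e) (@line_rel_irr _ e) hY
  (edge4_neq G12 G13 isT) (edge4_twins G12 G13 tw1)
  (edge4_neq G01 G23 isT) (edge4_twins G01 G23 tw2) _).
by move=> p q; rewrite !inE => /orP [] /eqP -> /orP [] /eqP ->; exact: edge4_neq.
Qed.

Lemma G2_gap : G = G2 -> det_index e < det_number (line_rel e).
Proof.
move=> HG.
have G01 : G o0 o1 by rewrite HG. have G02 : G o0 o2 by rewrite HG.
have G13 : G o1 o3 by rewrite HG. have G23 : G o2 o3 by rewrite HG.
have di : det_index e <= 1.
  by apply: (det_index_le1 G01); rewrite HG; exact: G2_rigid.
have [tw1 tw2] := G2_twins; rewrite -HG in tw1 tw2.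
have [Y hY ->] := det_numberP (line_rel e).
apply: leq_ltn_trans di (vdet_card_twins2 (@line_rel_sym _ e) (@line_rel_irr _ e) hY
  (edge4_neq G01 G23 isT) (edge4_twins G01 G23 tw1)
  (edge4_neq G02 G13 isT) (edge4_twins G02 G13 tw2) _).
by move=> p q; rewrite !inE => /orP [] /eqP -> /orP [] /eqP ->; exact: edge4_neq.
Qed.

Lemma G3_gap : G = G3 -> det_index e < det_number (line_rel e).
Proof.
move=> HG.
have G01 : G o0 o1 by rewrite HG. have G02 : G o0 o2 by rewrite HG.
have G03 : G o0 o3 by rewrite HG. have G12 : G o1 o2 by rewrite HG.
have G13 : G o1 o3 by rewrite HG. have G23 : G o2 o3 by rewrite HG.
have di : det_index e <= 2.
  by apply: (det_index_le2 (edge4_neq G01 G02 isT)); rewrite HG; exact: G3_rigid.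
have [tw1 tw2 tw3] := G3_twins; rewrite -HG in tw1 tw2 tw3.
have [Y hY ->] := det_numberP (line_rel e).
apply: leq_ltn_trans di (vdet_card_twins3 (@line_rel_sym _ e) (@line_rel_irr _ e) hY
  (edge4_neq G01 G23 isT) (edge4_twins G01 G23 tw1)
  (edge4_neq G02 G13 isT) (edge4_twins G02 G13 tw2)
  (edge4_neq G03 G12 isT) (edge4_twins G03 G12 tw3) _ _ _).
all: by move=> p q; rewrite !inE => /orP [] /eqP -> /orP [] /eqP ->; exact: edge4_neq.
Qed.

End Exceptional.

Lemma exceptional_gap : iso_to e G1 \/ iso_to e G2 \/ iso_to e G3 ->
  det_index e < det_number (line_rel e).
Proof.
case=> [|[|]] [h [[g hK gK] hiso]].
- exact: G1_gap hK gK hiso erefl.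
- exact: G2_gap hK gK hiso erefl.
- exact: G3_gap hK gK hiso erefl.
Qed.

Lemma det_index_le_det_line : det_index e <= det_number (line_rel e).
Proof.
by have [Y hY ->] := det_numberP (line_rel e); apply/det_index_min/vdet_line_edet.
Qed.

Lemma det_line_le_det_index : ~ (iso_to e G1 \/ iso_to e G2 \/ iso_to e G3) ->
  det_number (line_rel e) <= det_index e.
Proof.
by move=> not_exc; have [X hX ->] := det_indexP; apply/det_number_min/edet_vdet_line.
Qed.

End Connected.

End Graph.

Theorem theorem1 (T : finType) (e : rel T) :
  simple_graph e -> connected_graph e -> 3 <= #|T| ->
  (det_index e = det_number (line_rel e) <->
   ~ (iso_to e G1 \/ iso_to e G2 \/ iso_to e G3)).
Proof.
move=> [esym eirr] econn card_T; split => [eq_dets exc | not_exc].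
  by have := exceptional_gap esym eirr econn card_T exc; rewrite eq_dets ltnn.
apply/eqP; rewrite eqn_leq det_index_le_det_line //.
exact: det_line_le_det_index.
Qed.
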